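(* Let $\{\mathcal{C}_n\}$ be a sequence of binary linear codes with blocklengths $N_n\to\infty$ and rates $r_n\to r$ for some $r\in(0,1)$. Suppose there are sequences $0\le a_n<b_n\le1$ with $a_n\to0$, $b_n\to1$, and $w_n\to\infty$ such that the average EXIT function $h^{(n)}$ of $\mathcal{C}_n$ satisfies $$\frac{d h^{(n)}(p)}{dp}\ge w_n\log(N_n)\,h^{(n)}(p)\big(1-h^{(n)}(p)\big)\quad\text{for all }a_n<p<b_n.$$ Then $\{\mathcal{C}_n\}$ is capacity achieving on the BEC under block-MAP decoding.
   Context: Binary linear codes are assumed proper and of minimum distance at least $2$; rate $=K/N$; $\log$ is natural. A uniform codeword $\underline{X}$ is sent over $\mathrm{BEC}(p)$ (each bit erased independently with probability $p$), giving $\underline{Y}$. The average EXIT function is $h(p)=\frac1N\sum_{i=1}^N H(X_i\mid\underline{Y}_{\sim i})$ (entropy in bits; $\underline{Y}_{\sim i}$ omits coordinate $i$). $P_B(p)$ is the probability that $\underline{X}$ is not uniquely determined by $\underline{Y}$. A sequence of codes with rates $r_n\to r\in(0,1)$ is capacity achieving under block-MAP decoding if $\lim_n P_B^{(n)}(p)=0$ for every $p\in[0,1-r)$. *)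

From Stdlib Require Import Reals.
From mathcomp Require Import all_boot.
Set Implicit Arguments. Unset Strict Implicit. Unset Printing Implicit Defensive.

(* Binary words of length N: functions 'I_N -> bool (bool = F_2, true = 1). *)
Definition word (N : nat) := {ffun 'I_N -> bool}.
Definition wzero (N : nat) : word N := [ffun _ => false].
Definition wxor (N : nat) (x y : word N) : word N := [ffun j => xorb (x j) (y j)].

Definition linear_code (N : nat) (C : {set word N}) : Prop :=
  wzero N \in C /\ (forall x y, x \in C -> y \in C -> wxor x y \in C).

Definition proper_code (N : nat) (C : {set word N}) : Prop :=
  forall i : 'I_N, exists x, x \in C /\ x i = true.

Definition min_dist_ge2 (N : nat) (C : {set word N}) : Prop :=
  forall x y, x \in C -> y \in C -> x != y -> 2 <= #|[set j | x j != y j]|.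

Local Open Scope R_scope.

(* Rate K/N where |C| = 2^K. *)
Definition rate (N : nat) (C : {set word N}) : R :=
  (ln (INR #|C|) / ln 2) / INR N.

(* Probability of erasure pattern E (set of erased coordinates) on BEC(p). *)
Definition perasure (N : nat) (p : R) (E : {set 'I_N}) : R :=
  pow p #|E| * pow (1 - p) (N - #|E|).

Definition log2 (x : R) : R := ln x / ln 2.

(* Codewords consistent with the observation of x under erasure pattern E,
   coordinate i omitted (the observation Y_{~i}). *)
Definition consistent_noti (N : nat) (C : {set word N}) (x : word N)
  (E : {set 'I_N}) (i : 'I_N) : {set word N} :=
  [set c in C | [forall j, ((j \notin E) && (j != i)) ==> (c j == x j)]].

(* H(X_i | Y_{~i}) in bits, for X uniform on C sent over BEC(p):
   - E[ log2 P(X_i = x_i | Y_{~i}) ]. *)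
Definition Hcond (N : nat) (C : {set word N}) (p : R) (i : 'I_N) : R :=
  - \big[Rplus/0]_(x in C) \big[Rplus/0]_(E : {set 'I_N})
      (/ INR #|C| * perasure p E *
       log2 (INR #|[set c in consistent_noti C x E i | c i == x i]|
             / INR #|consistent_noti C x E i|)).

Definition exit_fun (N : nat) (C : {set word N}) (p : R) : R :=
  / INR N * \big[Rplus/0]_(i : 'I_N) Hcond C p i.

Definition consistent (N : nat) (C : {set word N}) (x : word N)
  (E : {set 'I_N}) : {set word N} :=
  [set c in C | [forall j, (j \notin E) ==> (c j == x j)]].

(* Block-MAP error probability: X not uniquely determined by Y. *)
Definition PB (N : nat) (C : {set word N}) (p : R) : R :=
  \big[Rplus/0]_(x in C) \big[Rplus/0]_(E : {set 'I_N})
    (/ INR #|C| * perasure p E *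
     (if (1 < #|consistent C x E|)%N then 1 else 0)).

(* Capacity achieving under block-MAP decoding, for rates converging to r. *)
Definition capacity_achieving (N : nat -> nat) (C : forall n, {set word (N n)})
  (r : R) : Prop :=
  forall p, 0 <= p < 1 - r -> Un_cv (fun n => PB (C n) p) 0.

From Stdlib Require Import Reals Lra FunctionalExtensionality ClassicalEpsilon.
From HB Require Import structures.
From mathcomp Require Import all_boot zify.
Local Open Scope R_scope.

(* Let Phi(p) = H(X | Y) in bits.  Then
   Phi(0) = 0, Phi(1) = K = N * rate, and by the area theorem Phi' = N h.  Bit i is
   undetermined by Y_{~i} exactly when some codeword vanishing outside the erased
   positions and i has a 1 at i; so H(X_i | Y_{~i}) is the probability of that event,
   and P_B <= N h since a second consistent codeword produces such an event.
   The hypothesis says that logit h grows with slope at least c = w log N on (a, b).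
   Fix p < 1 - r and d = (1 - r - p) / 3.  If h(p + d) > 1/2, then 1 - h <= e^{-cd}
   on [p + 2d, 1 - d/2], and integrating Phi' gives K / N >= (1 - e^{-cd}) (r + d/2),
   which exceeds the rate for large n.  Hence h(p + d) <= 1/2, so
   h(p) <= e^{-cd} <= N^{-2} and P_B(p) <= 1/N. *)

Lemma Rplus_associative : associative Rplus.
Proof. by move=> x y z; rewrite Rplus_assoc. Qed.

HB.instance Definition _ :=
  Monoid.isComLaw.Build R 0 Rplus Rplus_associative Rplus_comm Rplus_0_l.
HB.instance Definition _ := Monoid.isMulLaw.Build R 0 Rmult Rmult_0_l Rmult_0_r.
HB.instance Definition _ :=
  Monoid.isAddLaw.Build R Rmult Rplus Rmult_plus_distr_r Rmult_plus_distr_l.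

Lemma sumR_le {I : Type} (r : seq I) (P : pred I) (F G : I -> R) :
  (forall i, P i -> F i <= G i) ->
  \big[Rplus/0]_(i <- r | P i) F i <= \big[Rplus/0]_(i <- r | P i) G i.
Proof. by move=> FG; apply: big_ind2 => // [|x1 x2 y1 y2]; lra. Qed.

Lemma sumR_ge0 {I : Type} (r : seq I) (P : pred I) (F : I -> R) :
  (forall i, P i -> 0 <= F i) -> 0 <= \big[Rplus/0]_(i <- r | P i) F i.
Proof. by move=> F0; apply: big_ind => // [|x y]; lra. Qed.

Lemma sumR_const (T : finType) (A : {pred T}) c :
  \big[Rplus/0]_(i in A) c = INR #|A| * c.
Proof.
rewrite big_const; elim: #|A| => [|k IH]; first by rewrite /=; lra.
by rewrite S_INR /= IH; lra.
Qed.

Lemma sumR_const_ord n c : \big[Rplus/0]_(i < n) c = INR n * c.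
Proof. by rewrite sumR_const card_ord. Qed.

Lemma derivable_pt_lim_big {I : Type} (r : seq I) (P : pred I) (F F' : I -> R -> R) x :
  (forall i, P i -> derivable_pt_lim (F i) x (F' i x)) ->
  derivable_pt_lim (fun y => \big[Rplus/0]_(i <- r | P i) F i y) x
                   (\big[Rplus/0]_(i <- r | P i) F' i x).
Proof.
move=> HF; elim: r => [|j r IH].
  have -> : (fun y => \big[Rplus/0]_(i <- [::] | P i) F i y) = fun=> 0.
    by apply: functional_extensionality => y; rewrite big_nil.
  by rewrite big_nil; apply: derivable_pt_lim_const.
have -> : (fun y => \big[Rplus/0]_(i <- j :: r | P i) F i y) =
    fun y => (if P j then F j y else 0) + \big[Rplus/0]_(i <- r | P i) F i y.
  by apply: functional_extensionality => y; rewrite big_cons; case: (P j); rewrite ?Rplus_0_l.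
rewrite big_cons; case Pj: (P j); first exact: derivable_pt_lim_plus (HF j Pj) IH.
rewrite -[X in derivable_pt_lim _ _ X]Rplus_0_l.
exact: derivable_pt_lim_plus (derivable_pt_lim_const 0 x) IH.
Qed.

Lemma nondecreasing_of_derivable (f : R -> R) x y : x <= y ->
  (forall t, x <= t <= y -> exists l, derivable_pt_lim f t l /\ 0 <= l) ->
  f x <= f y.
Proof.
move=> [xy|<-] Hf; last exact: Rle_refl.
pose f' t := epsilon (inhabits 0) (fun l => derivable_pt_lim f t l /\ 0 <= l).
have Hf' t : x <= t <= y -> derivable_pt_lim f t (f' t) /\ 0 <= f' t.
  by move=> Ht; exact: (epsilon_spec _ (fun l => derivable_pt_lim f t l /\ 0 <= l) (Hf t Ht)).
have [t [Dt Ht]] := MVT_cor2 f f' x y xy (fun t Ht => proj1 (Hf' t Ht)).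
have := proj2 (Hf' t ltac:(lra)); nra.
Qed.

Lemma constant_of_derivable0 (f : R -> R) x y :
  (forall t, derivable_pt_lim f t 0) -> f x = f y.
Proof.
move=> Hf; wlog xy : x y / x < y.
  move=> W; case: (Rtotal_order x y) => [/W //|[-> //|/W ->//]].
have [t [Dt _]] := MVT_cor2 f (fun=> 0) x y xy (fun t _ => Hf t); lra.
Qed.

Lemma increment_ge_of_derivable {F g : R -> R} {m s y} :
  (forall t, derivable_pt_lim F t (g t)) -> 0 <= s <= y -> y <= 1 ->
  (forall t, 0 <= t <= 1 -> 0 <= g t) -> (forall t, s <= t <= y -> m <= g t) ->
  m * (y - s) <= F 1 - F 0.
Proof.
move=> DF sy y1 g0 gm.
have F0s : F 0 <= F s.
  apply: nondecreasing_of_derivable; first lra.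
  by move=> t Ht; exists (g t); split; [|apply: g0; lra].
have Fy1 : F y <= F 1.
  apply: nondecreasing_of_derivable; first lra.
  by move=> t Ht; exists (g t); split; [|apply: g0; lra].
have : F s - m * s <= F y - m * y.
  apply: (nondecreasing_of_derivable (fun t => F t - m * t)); first lra.
  move=> t Ht; exists (g t - m * 1); split; last by have := gm t Ht; lra.
  exact: derivable_pt_lim_minus (DF t) (derivable_pt_lim_scal id m t 1 (derivable_pt_lim_id t)).
lra.
Qed.

Lemma exp_le x y : x <= y -> exp x <= exp y.
Proof. by move=> [xy|<-]; [apply/Rlt_le/exp_increasing | apply: Rle_refl]. Qed.

Lemma ln_le x y : 0 < x -> x <= y -> ln x <= ln y.
Proof. by move=> x0 [xy|<-]; [apply/Rlt_le/ln_increasing | apply: Rle_refl]. Qed.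

Lemma ln_le0 x : 0 < x -> x <= 1 -> ln x <= 0.
Proof. by move=> x0 x1; rewrite -ln_1; apply: ln_le. Qed.

Lemma le_exp_of_ln_le x y : 0 < x -> ln x <= y -> x <= exp y.
Proof. by move=> x0 xy; rewrite -(exp_ln x) //; apply: exp_le. Qed.

Lemma exp_neg_le_inv x : 0 < x -> exp (- x) <= / x.
Proof.
move=> x0; rewrite exp_Ropp; apply: Rinv_le_contravar => //.
by have := exp_ineq1_le x; lra.
Qed.

Lemma mul_exp_neg_le_inv n x : 0 < n -> 2 * ln n <= x -> n * exp (- x) <= / n.
Proof.
move=> n0 nx; have : exp (- x) <= / (n * n).
  rewrite -(exp_ln (n * n)); last nra.
  by rewrite -exp_Ropp; apply: exp_le; rewrite ln_mult //; lra.
move=> H; have -> : / n = n * / (n * n) by field; lra.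
by apply: Rmult_le_compat_l; lra.
Qed.

Lemma ln2_pos : 0 < ln 2.
Proof. by rewrite -ln_1; apply: ln_increasing; lra. Qed.

Definition logit (z : R) : R := ln z - ln (1 - z).

Lemma derivable_pt_lim_logit z : 0 < z < 1 ->
  derivable_pt_lim logit z (/ z + / (1 - z)).
Proof.
move=> z01.
have D1 : derivable_pt_lim (fun t => ln (1 - t)) z (/ (1 - z) * (0 - 1)).
  apply: (derivable_pt_lim_comp (fun t => 1 - t) ln).
    exact: derivable_pt_lim_minus (derivable_pt_lim_const 1 z) (derivable_pt_lim_id z).
  by apply: derivable_pt_lim_ln; lra.
have -> : / z + / (1 - z) = / z - / (1 - z) * (0 - 1) by ring.
by apply: derivable_pt_lim_minus D1; apply: derivable_pt_lim_ln; lra.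
Qed.

Section LogisticGrowth.
Variables (h : R -> R) (c a b : R).
Hypothesis c_ge0 : 0 <= c.
Hypothesis h_range : forall t, a < t < b -> 0 <= h t <= 1.
Hypothesis h_logistic : forall t, a < t < b ->
  exists l, derivable_pt_lim h t l /\ c * h t * (1 - h t) <= l.

Lemma logistic_nondecreasing x y : a < x -> x <= y -> y < b -> h x <= h y.
Proof.
move=> ax xy yb; apply: nondecreasing_of_derivable => // t Ht.
have [l [Dl cl]] := h_logistic t ltac:(lra); exists l; split => //.
have [h0 h1] := h_range t ltac:(lra).
suff : 0 <= c * h t * (1 - h t) by lra.
by apply: Rmult_le_pos; [apply: Rmult_le_pos|]; lra.
Qed.

Lemma logit_growth x y : a < x -> x <= y -> y < b -> 0 < h x -> h y < 1 ->
  c * (y - x) <= logit (h y) - logit (h x).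
Proof.
move=> ax xy yb hx0 hy1.
suff : logit (h x) - c * x <= logit (h y) - c * y by lra.
apply: (nondecreasing_of_derivable (fun t => logit (h t) - c * t)) => // t Ht.
have [l [Dl cl]] := h_logistic t ltac:(lra).
have ht : 0 < h t < 1.
  by split; [apply: Rlt_le_trans hx0 _ | apply: Rle_lt_trans hy1];
    apply: logistic_nondecreasing; lra.
exists ((/ h t + / (1 - h t)) * l - c * 1); split.
  apply: derivable_pt_lim_minus;
    last exact: derivable_pt_lim_scal id c t 1 (derivable_pt_lim_id t).
  exact (derivable_pt_lim_comp h logit t l _ Dl (derivable_pt_lim_logit _ ht)).
have -> : (/ h t + / (1 - h t)) * l - c * 1 = (l - c * h t * (1 - h t)) / (h t * (1 - h t)).
  by field; lra.
by apply: Rmult_le_pos; [lra | apply/Rlt_le/Rinv_0_lt_compat; nra].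
Qed.

Lemma logistic_small_before p q : a < p -> p <= q -> q < b -> h q <= / 2 ->
  h p <= exp (- (c * (q - p))).
Proof.
move=> ap pq qb hq.
have [[hp0|<-] _] := h_range p ltac:(lra); last exact/Rlt_le/exp_pos.
have hpq : h p <= h q by apply: logistic_nondecreasing.
have G := logit_growth p q ap pq qb hp0 ltac:(lra).
have : ln (h q) <= ln (1 - h q) by apply: ln_le; lra.
have : ln (1 - h p) <= 0 by apply: ln_le0; lra.
rewrite /logit in G => *; apply: le_exp_of_ln_le => //; lra.
Qed.

Lemma logistic_large_after q t : a < q -> q <= t -> t < b -> / 2 < h q ->
  1 - h t <= exp (- (c * (t - q))).
Proof.
move=> aq qt tb hq.
have [_ [ht1|->]] := h_range t ltac:(lra); last by rewrite Rminus_diag; exact/Rlt_le/exp_pos.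
have hqt : h q <= h t by apply: logistic_nondecreasing.
have G := logit_growth q t aq qt tb ltac:(lra) ht1.
have : ln (1 - h q) <= ln (h q) by apply: ln_le; lra.
have : ln (h t) <= 0 by apply: ln_le0; lra.
rewrite /logit in G => *; apply: le_exp_of_ln_le; lra.
Qed.

End LogisticGrowth.

Arguments logistic_small_before {h c a b} c_ge0 h_range h_logistic {p q}.
Arguments logistic_large_after {h c a b} c_ge0 h_range h_logistic {q t}.

Section ErasurePatterns.
Variable N : nat.
Implicit Types (E : {set 'I_N}) (i : 'I_N).

(* For [i \notin E]: the probability that the erased coordinates other than [i] are
   exactly [E], i.e. [perasure p E + perasure p (i |: E)]. *)
Definition perasure_noti p E : R := p ^ #|E| * (1 - p) ^ (N - #|E|).-1.

Lemma perasure_ge0 p E : 0 <= p <= 1 -> 0 <= perasure p E.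
Proof. by move=> p01; apply: Rmult_le_pos; apply: pow_le; lra. Qed.

Lemma card_lt_notin {i E} : i \notin E -> (#|E| < N)%N.
Proof.
move=> iE; have := cardsC E; rewrite card_ord.
suff : (0 < #|~: E|)%N by lia.
by rewrite card_gt0; apply/set0Pn; exists i; rewrite inE.
Qed.

Lemma perasure_setU1 p {i E} : i \notin E ->
  perasure p E + perasure p (i |: E) = perasure_noti p E.
Proof.
move=> iE; have lt_EN := card_lt_notin iE.
rewrite /perasure /perasure_noti cardsU1 iE add1n subnS.
by rewrite -{1}(prednK (_ : 0 < N - #|E|)%N) ?subn_gt0 //=; ring.
Qed.

Lemma sum_setU1_notin i (F : {set 'I_N} -> R) :
  \big[Rplus/0]_(E : {set 'I_N} | i \in E) F E =
  \big[Rplus/0]_(E : {set 'I_N} | i \notin E) F (i |: E).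
Proof.
pose toggle (E : {set 'I_N}) := if i \in E then E :\ i else i |: E.
have toggleK : involutive toggle.
  by move=> E; rewrite /toggle; case: (boolP (i \in E)) => iE;
    rewrite ?setD11 ?setD1K ?setU11 ?setU1K.
rewrite (reindex toggle); last exact/onW_bij/inv_bij.
apply: eq_big => E; rewrite /toggle; case: ifP => iE; rewrite ?setD11 ?setU11 ?iE //.
Qed.

Lemma sum_perasure_pair p i (G : {set 'I_N} -> R) :
  (forall E, i \notin E -> G (i |: E) = G E) ->
  \big[Rplus/0]_(E : {set 'I_N}) (perasure p E * G E) =
  \big[Rplus/0]_(E : {set 'I_N} | i \notin E) (perasure_noti p E * G E).
Proof.
move=> GE; rewrite (bigID (fun E => i \in E)) /= sum_setU1_notin -big_split /=.
by apply: eq_bigr => E iE; rewrite GE // -(perasure_setU1 p iE); ring.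
Qed.

Lemma derivable_pt_lim_perasure p E :
  derivable_pt_lim (fun q => perasure q E) p
    (\big[Rplus/0]_(i < N)
       (if i \in E then perasure_noti p (E :\ i) else - perasure_noti p E)).
Proof.
have D1 : derivable_pt_lim (fun q => (1 - q) ^ (N - #|E|)) p
            (INR (N - #|E|) * (1 - p) ^ (N - #|E|).-1 * (0 - 1)).
  apply: (derivable_pt_lim_comp (fun q => 1 - q) (pow^~ _)); last exact: derivable_pt_lim_pow.
  exact: derivable_pt_lim_minus (derivable_pt_lim_const 1 p) (derivable_pt_lim_id p).
suff -> : \big[Rplus/0]_(i < N)
      (if i \in E then perasure_noti p (E :\ i) else - perasure_noti p E) =
    INR #|E| * p ^ #|E|.-1 * (1 - p) ^ (N - #|E|) +
    p ^ #|E| * (INR (N - #|E|) * (1 - p) ^ (N - #|E|).-1 * (0 - 1)).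
  exact: derivable_pt_lim_mult (derivable_pt_lim_pow p #|E|) D1.
rewrite (bigID (mem E)) /=.
rewrite (eq_bigr (fun=> p ^ #|E|.-1 * (1 - p) ^ (N - #|E|))); last first.
  by move=> i iE; rewrite iE /perasure_noti (cardsD1 i E) iE /= subnS.
rewrite [X in _ + X](eq_bigr (fun=> - perasure_noti p E)); last first.
  by move=> i iE; rewrite (negbTE iE).
rewrite !sumR_const (_ : #|[pred i | i \notin E]| = N - #|E|)%N.
  (* [ring] rejects the non-numeral exponents, so abstract the powers first. *)
  rewrite /perasure_noti.
  by move: (INR _) (INR _) (p ^ _) (p ^ _) ((1 - p) ^ _) ((1 - p) ^ _) => *; ring.
have := cardsC E; rewrite card_ord => NE.
by rewrite -[X in (X - _)%N]NE addKn; apply: eq_card => i; rewrite !inE.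
Qed.

Lemma derivable_pt_lim_sum_perasure (g : {set 'I_N} -> R) p :
  derivable_pt_lim (fun q => \big[Rplus/0]_(E : {set 'I_N}) (perasure q E * g E)) p
    (\big[Rplus/0]_(i < N) \big[Rplus/0]_(E : {set 'I_N} | i \notin E)
       (perasure_noti p E * (g (i |: E) - g E))).
Proof.
set dP := fun E => \big[Rplus/0]_i
  (if i \in E then perasure_noti p (E :\ i) else - perasure_noti p E).
suff -> : \big[Rplus/0]_(i < N) \big[Rplus/0]_(E : {set 'I_N} | i \notin E)
            (perasure_noti p E * (g (i |: E) - g E)) =
          \big[Rplus/0]_(E : {set 'I_N}) (dP E * g E).
  apply: (derivable_pt_lim_big _ xpredT (fun E q => perasure q E * g E)
                                 (fun E _ => dP E * g E)) => E _.
  rewrite -[X in derivable_pt_lim _ _ X]Rplus_0_r -[X in _ + X](Rmult_0_r (perasure p E)).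
  exact: derivable_pt_lim_mult (derivable_pt_lim_perasure p E) (derivable_pt_lim_const (g E) p).
symmetry; under eq_bigr do rewrite big_distrl /=.
rewrite exchange_big /=; apply: eq_bigr => i _.
rewrite (bigID (fun E => i \in E)) /= sum_setU1_notin -big_split /=.
by apply: eq_bigr => E /negbTE iE; rewrite setU11 iE setU1K ?iE //; ring.
Qed.

Lemma sum_perasure0 (G : {set 'I_N} -> R) :
  \big[Rplus/0]_(E : {set 'I_N}) (perasure 0 E * G E) = G set0.
Proof.
rewrite (bigD1 set0) //= big1 => [|E E0].
  by rewrite /perasure cards0 /= Rminus_0_r pow1; ring.
by rewrite /perasure pow_i ?Rmult_0_l //; apply/ltP; rewrite card_gt0.
Qed.

Lemma sum_perasure1 (G : {set 'I_N} -> R) :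
  \big[Rplus/0]_(E : {set 'I_N}) (perasure 1 E * G E) = G setT.
Proof.
rewrite (bigD1 setT) //= big1 => [|E ET].
  by rewrite /perasure cardsT card_ord subnn /= pow1; ring.
have [i iE] : exists i, i \notin E.
  apply/existsP; move: ET; apply: contraNT => /existsPn iE.
  by apply/eqP/setP => i; rewrite inE; apply/negPn.
rewrite /perasure Rminus_diag pow_i ?Rmult_0_r ?Rmult_0_l //.
by apply/ltP; rewrite subn_gt0 (card_lt_notin iE).
Qed.

Lemma sum_perasure p : \big[Rplus/0]_(E : {set 'I_N}) perasure p E = 1.
Proof.
pose S q := \big[Rplus/0]_(E : {set 'I_N}) (perasure q E * 1).
suff : S p = S 0 by rewrite /S sum_perasure0; under eq_bigr do rewrite Rmult_1_r.
apply: constant_of_derivable0 => q.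
have := derivable_pt_lim_sum_perasure (fun=> 1) q.
by rewrite big1 // => i _; rewrite big1 // => E _; ring.
Qed.

End ErasurePatterns.

Arguments perasure_noti {N} p E.

Section LinearCode.
Variables (N : nat) (C : {set word N}).
Hypothesis linC : linear_code C.
Implicit Types (x c d : word N) (E : {set 'I_N}) (i : 'I_N).

Lemma wxorE x y j : wxor x y j = xorb (x j) (y j).
Proof. by rewrite ffunE. Qed.

Lemma wxorK d : involutive (fun c => wxor c d).
Proof. by move=> c; apply/ffunP => j; rewrite !wxorE; case: (c j); case: (d j). Qed.

Lemma mem_wxor x c : x \in C -> (wxor c x \in C) = (c \in C).
Proof.
case: linC => _ lin xC; apply/idP/idP => [|cC]; last exact: lin.
by move=> /lin /(_ xC); rewrite wxorK.
Qed.

Lemma card_code_gt0 : 0 < INR #|C|.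
Proof. by case: linC => C0 _; apply/lt_0_INR/ltP/card_gt0P; exists (wzero N). Qed.

Definition supported E : {set word N} :=
  [set c in C | [forall j, (j \notin E) ==> ~~ c j]].

(* Bit [i] is not determined by the unerased bits other than [i]. *)
Definition ambiguous E i : bool := [exists c in supported (i |: E), c i].

Definition ambiguity E i : R := if ambiguous E i then 1 else 0.

(* H(X | erasure pattern E): X is uniform on a coset of [supported E]. *)
Definition erased_entropy E : R := log2 (INR #|supported E|).

Lemma card_supported_gt0 E : (0 < #|supported E|)%N.
Proof.
apply/card_gt0P; exists (wzero N); rewrite inE; case: linC => -> _ /=.
by apply/forallP => j; rewrite ffunE; apply/implyP.
Qed.

Lemma supported_sub {E E'} : E \subset E' -> supported E \subset supported E'.
Proof.
move=> EE'; apply/subsetP => c; rewrite !inE => /andP [-> /forallP cE] /=.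
apply/forallP => j; apply/implyP => jE'; apply: (implyP (cE j)).
by apply: contra jE'; apply: (subsetP EE').
Qed.

Lemma consistent_wxor x E :
  x \in C -> consistent C x E = (fun c => wxor c x) @^-1: supported E.
Proof.
move=> xC; apply/setP => c; rewrite !inE mem_wxor //; congr (_ && _).
by apply: eq_forallb => j; rewrite wxorE; case: (c j); case: (x j).
Qed.

Lemma consistent_noti_wxor x E i :
  x \in C -> consistent_noti C x E i = (fun c => wxor c x) @^-1: supported (i |: E).
Proof.
move=> xC; apply/setP => c; rewrite !inE mem_wxor //; congr (_ && _).
apply: eq_forallb => j; rewrite !inE negb_or wxorE andbC.
by case: (c j); case: (x j).
Qed.

(* [c |-> c + d] is an involution of [A] exchanging the two halves. *)
Lemma card_flip_split {A : {set word N}} {d i} : d i ->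
  (forall c, c \in A -> wxor c d \in A) ->
  #|[set c in A | c i]| = #|[set c in A | ~~ c i]|.
Proof.
move=> di Ad; rewrite -(card_preimset _ (can_inj (wxorK d))); apply: eq_card => c.
rewrite !inE wxorE di; case: (c i); rewrite ?andbT ?andbF //=.
by apply/idP/idP => /Ad //; rewrite wxorK.
Qed.

Lemma card_supported_split E i :
  #|supported (i |: E)| =
  ((if ambiguous E i then 2 else 1) * #|[set c in supported (i |: E) | ~~ c i]|)%N.
Proof.
set S := supported (i |: E).
rewrite -(cardsID [set c : word N | c i] S).
have -> : S :&: [set c : word N | c i] = [set c in S | c i] by apply/setP => c; rewrite !inE.
have -> : S :\: [set c : word N | c i] = [set c in S | ~~ c i].
  by apply/setP => c; rewrite !inE andbC.
rewrite /ambiguous; case: (boolP [exists c in S, c i]) => [/exists_inP [d dS di]|noamb].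
  rewrite (card_flip_split di) ?mul2n ?addnn // => c.
  move: dS; rewrite !inE => /andP [dC /forallP dE] /andP [cC /forallP cE].
  rewrite mem_wxor // cC /=; apply/forallP => j; apply/implyP => jE.
  by rewrite wxorE (negbTE (implyP (cE j) jE)) (negbTE (implyP (dE j) jE)).
rewrite mul1n -[RHS]add0n; congr (_ + _)%N.
apply/eqP; rewrite cards_eq0; apply/eqP/setP => c.
rewrite inE in_set0; apply/negP => /andP [cS ci].
by case/negP: noamb; apply/exists_inP; exists c.
Qed.

Lemma supported_setU1_notin {E i} : i \notin E ->
  [set c in supported (i |: E) | ~~ c i] = supported E.
Proof.
move=> iE; apply/setP => c; rewrite !inE; apply/idP/idP.
  case/andP => /andP [-> /forallP cE] ci /=; apply/forallP => j; apply/implyP => jE.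
  by case: (eqVneq j i) => [-> //|ji]; apply: (implyP (cE j)); rewrite !inE negb_or ji.
case/andP => -> /forallP cE; rewrite (implyP (cE i) iE) andbT /=.
by apply/forallP => j; apply/implyP; rewrite !inE negb_or => /andP [_]; apply/implyP.
Qed.

Lemma log2_card_split E i :
  log2 (INR #|[set c in supported (i |: E) | ~~ c i]| / INR #|supported (i |: E)|) =
  - ambiguity E i.
Proof.
rewrite card_supported_split /ambiguity; set k := #|[set c in _ | _]|.
have k0 : 0 < INR k.
  apply/lt_0_INR/ltP; move: (card_supported_gt0 (i |: E)).
  by rewrite card_supported_split; case: ambiguous; rewrite ?mul1n ?mul2n ?double_gt0.
have := ln2_pos; rewrite /log2; case: ambiguous => l2; rewrite mult_INR /=.
  have -> : INR k / ((1 + 1) * INR k) = / 2 by field; lra.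
  by rewrite ln_Rinv; [field|]; lra.
by rewrite Rmult_1_l /Rdiv Rinv_r ?ln_1; lra.
Qed.

Lemma erased_entropy_setU1 E i : i \notin E ->
  erased_entropy (i |: E) - erased_entropy E = ambiguity E i.
Proof.
move=> iE; rewrite -[RHS]Ropp_involutive -log2_card_split (supported_setU1_notin iE).
have pos E' : 0 < INR #|supported E'| by apply/lt_0_INR/ltP; exact: card_supported_gt0.
by rewrite /erased_entropy /log2 /Rdiv ln_mult ?ln_Rinv //; [ring | apply: Rinv_0_lt_compat].
Qed.

Lemma ambiguity_range E i : 0 <= ambiguity E i <= 1.
Proof. by rewrite /ambiguity; case: ambiguous; lra. Qed.

Lemma Hcond_ambiguity p i :
  Hcond C p i = \big[Rplus/0]_(E : {set 'I_N}) (perasure p E * ambiguity E i).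
Proof.
have C0 := card_code_gt0.
rewrite /Hcond (eq_bigr (fun=> / INR #|C| *
  - \big[Rplus/0]_(E : {set 'I_N}) (perasure p E * ambiguity E i))) => [|x xC].
  by rewrite sumR_const; field; lra.
rewrite (big_morph _ Ropp_plus_distr Ropp_0) big_distrr /=; apply: eq_bigr => E _.
have -> : #|consistent_noti C x E i| = #|supported (i |: E)|.
  by rewrite consistent_noti_wxor // card_preimset //; exact: can_inj (wxorK x).
have -> : #|[set c in consistent_noti C x E i | c i == x i]| =
          #|[set c in supported (i |: E) | ~~ c i]|.
  rewrite -[RHS](card_preimset _ (can_inj (wxorK x))); apply: eq_card => c.
  rewrite consistent_noti_wxor // !inE wxorE.
  by case: (c i); case: (x i); rewrite ?andbT ?andbF.
by rewrite log2_card_split; ring.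
Qed.

Lemma Hcond_range p i : 0 <= p <= 1 -> 0 <= Hcond C p i <= 1.
Proof.
move=> p01; rewrite Hcond_ambiguity -(sum_perasure N p); split.
  apply: sumR_ge0 => E _.
  by apply: Rmult_le_pos; [exact: perasure_ge0 | case: (ambiguity_range E i)].
apply: sumR_le => E _; rewrite -[X in _ <= X]Rmult_1_r.
by apply: Rmult_le_compat_l; [exact: perasure_ge0 | case: (ambiguity_range E i)].
Qed.

Lemma sum_Hcond p : \big[Rplus/0]_(i < N) Hcond C p i = INR N * exit_fun C p.
Proof.
rewrite /exit_fun; case: (posnP N) => [N0 | N_gt0].
  by rewrite big1 => [|[j jN] _]; [ring | exfalso; move: jN; rewrite N0].
by rewrite -Rmult_assoc Rinv_r ?Rmult_1_l //; apply/not_0_INR/eqP; rewrite -lt0n.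
Qed.

Lemma exit_fun_range p : 0 <= p <= 1 -> 0 <= exit_fun C p <= 1.
Proof.
move=> p01; rewrite /exit_fun; case: (posnP N) => [N0 | N_gt0].
  rewrite big1 ?Rmult_0_r => [|[j jN] _]; first lra.
  by exfalso; move: jN; rewrite N0.
have N_pos : 0 < INR N by apply/lt_0_INR/ltP.
have [S0 S1] : 0 <= \big[Rplus/0]_(i < N) Hcond C p i <= INR N * 1.
  rewrite -sumR_const_ord; split; first by apply: sumR_ge0 => i _; case: (Hcond_range p i p01).
  by apply: sumR_le => i _; case: (Hcond_range p i p01).
split; first by apply: Rmult_le_pos => //; apply/Rlt_le/Rinv_0_lt_compat.
apply: (Rmult_le_reg_l (INR N)) => //; rewrite -Rmult_assoc Rinv_r; lra.
Qed.

Lemma card_supported0 : #|supported set0| = 1%N.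
Proof.
apply/eqP; rewrite eqn_leq card_supported_gt0 andbT -(cards1 (wzero N)).
apply/subset_leq_card/subsetP => c; rewrite !inE => /andP [_ /forallP c0].
by apply/eqP/ffunP => j; rewrite ffunE; apply/negbTE/(implyP (c0 j)); rewrite inE.
Qed.

Lemma supportedT : supported setT = C.
Proof. by apply/setP => c; rewrite inE andb_idr // => _; apply/forallP => j; rewrite inE. Qed.

Lemma ambiguous_of_card_supported E : (1 < #|supported E|)%N -> exists i, ambiguous E i.
Proof.
case/card_gt1P => c [c' [cS c'S cc']].
have [d dS dnz] : exists2 d, d \in supported E & d != wzero N.
  by case: (eqVneq c (wzero N)) => [c0|]; [exists c'; rewrite // -c0 eq_sym | exists c].
have [j dj] : exists j, d j.
  apply/existsP; apply: contraNT dnz => /existsPn dj.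
  by apply/eqP/ffunP => j; rewrite ffunE; apply/negbTE/dj.
exists j; apply/exists_inP; exists d => //.
by apply: (subsetP (supported_sub (subsetUr [set j] E))).
Qed.

Lemma PB_supported p :
  PB C p = \big[Rplus/0]_(E : {set 'I_N})
             (perasure p E * (if (1 < #|supported E|)%N then 1 else 0)).
Proof.
have C0 := card_code_gt0.
rewrite /PB (eq_bigr (fun=> / INR #|C| * \big[Rplus/0]_(E : {set 'I_N})
  (perasure p E * (if (1 < #|supported E|)%N then 1 else 0)))) => [|x xC].
  by rewrite sumR_const; field; lra.
rewrite big_distrr /=; apply: eq_bigr => E _.
by rewrite consistent_wxor // card_preimset ?Rmult_assoc //; exact: can_inj (wxorK x).
Qed.

Lemma PB0 : PB C 0 = 0.
Proof. by rewrite PB_supported sum_perasure0 card_supported0. Qed.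

Lemma PB_ge0 p : 0 <= p <= 1 -> 0 <= PB C p.
Proof.
move=> p01; rewrite PB_supported; apply: sumR_ge0 => E _.
by apply: Rmult_le_pos; [exact: perasure_ge0 | case: ifP => _; lra].
Qed.

Lemma PB_le_exit_fun p : 0 <= p <= 1 -> PB C p <= INR N * exit_fun C p.
Proof.
move=> p01; rewrite PB_supported -sum_Hcond.
under [X in _ <= X]eq_bigr do rewrite Hcond_ambiguity.
rewrite exchange_big /=; apply: sumR_le => E _; rewrite -big_distrr /=.
apply: Rmult_le_compat_l; first exact: perasure_ge0.
have amb_ge0 i : 0 <= ambiguity E i by case: (ambiguity_range E i).
case: ifP => [/ambiguous_of_card_supported [j ambj] | _]; last exact: sumR_ge0.
rewrite (bigD1 j) //= {1}/ambiguity ambj.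
rewrite -[X in X <= _]Rplus_0_r; apply: Rplus_le_compat_l.
by apply: sumR_ge0 => i _.
Qed.

(* H(X | Y) in bits. *)
Definition cond_entropy p : R :=
  \big[Rplus/0]_(E : {set 'I_N}) (perasure p E * erased_entropy E).

Lemma cond_entropy0 : cond_entropy 0 = 0.
Proof.
rewrite /cond_entropy sum_perasure0 /erased_entropy card_supported0 /log2 ln_1.
by field; apply/Rgt_not_eq/ln2_pos.
Qed.

Lemma cond_entropy1 : cond_entropy 1 = log2 (INR #|C|).
Proof. by rewrite /cond_entropy sum_perasure1 /erased_entropy supportedT. Qed.

Lemma derivable_pt_lim_cond_entropy p :
  derivable_pt_lim cond_entropy p (INR N * exit_fun C p).
Proof.
rewrite -sum_Hcond.
suff -> : \big[Rplus/0]_(i < N) Hcond C p i =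
    \big[Rplus/0]_(i < N) \big[Rplus/0]_(E : {set 'I_N} | i \notin E)
      (perasure_noti p E * (erased_entropy (i |: E) - erased_entropy E)).
  exact: derivable_pt_lim_sum_perasure.
apply: eq_bigr => i _; rewrite Hcond_ambiguity (sum_perasure_pair _ p i (fun E => ambiguity E i)).
  by apply: eq_bigr => E iE; rewrite erased_entropy_setU1.
by move=> E iE; rewrite /ambiguity /ambiguous setUA setUid.
Qed.

Section Threshold.
Variables (a b c : R).
Hypothesis N_gt0 : (0 < N)%N.
Hypotheses (a_ge0 : 0 <= a) (b_le1 : b <= 1) (c_ge0 : 0 <= c).
Hypothesis exit_logistic : forall t, a < t < b ->
  exists l, derivable_pt_lim (exit_fun C) t l /\
    c * exit_fun C t * (1 - exit_fun C t) <= l.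

Lemma exit_fun_range_in t : a < t < b -> 0 <= exit_fun C t <= 1.
Proof. by move=> Ht; apply: exit_fun_range => //; lra. Qed.

Lemma rate_ge_of_exit_gt_half q gap y :
  a < q -> 0 < gap -> q + gap <= y -> y < b -> / 2 < exit_fun C q ->
  (1 - exp (- (c * gap))) * (y - q - gap) <= rate C.
Proof.
move=> aq gap0 qdy yb hq.
have N_pos : 0 < INR N by apply/lt_0_INR/ltP.
have large t : q + gap <= t <= y -> INR N * (1 - exp (- (c * gap))) <= INR N * exit_fun C t.
  move=> Ht; apply: Rmult_le_compat_l; first lra.
  have := logistic_large_after c_ge0 exit_fun_range_in exit_logistic aq
    (_ : q <= t) (_ : t < b) hq.
  have : exp (- (c * (t - q))) <= exp (- (c * gap)) by apply: exp_le; nra.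
  by lra.
have := increment_ge_of_derivable derivable_pt_lim_cond_entropy _ _ _ large.
rewrite cond_entropy1 cond_entropy0 Rminus_0_r => area.
apply: (Rmult_le_reg_l (INR N)) => //.
rewrite (_ : INR N * rate C = log2 (INR #|C|)); last first.
  by rewrite /rate /log2; field; split; apply: Rgt_not_eq; [exact: ln2_pos | lra].
rewrite (_ : y - q - gap = y - (q + gap)) -?Rmult_assoc; last ring.
apply: area; try lra.
by move=> t Ht; apply: Rmult_le_pos; [lra | case: (exit_fun_range t Ht)].
Qed.

Lemma PB_le_exp p gap r :
  a < p -> 0 < gap -> p + 3 * gap = 1 - r -> 0 <= r -> 1 - gap / 2 < b ->
  rate C < r + gap / 4 -> exp (- (c * gap)) <= gap / 8 ->
  PB C p <= INR N * exp (- (c * gap)).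
Proof.
move=> ap gap0 pdr r0 b_large rate_small e_small.
have hq : exit_fun C (p + gap) <= / 2.
  apply: Rnot_lt_le => hq.
  have e0 := exp_pos (- (c * gap)).
  have := rate_ge_of_exit_gt_half (p + gap) gap (1 - gap / 2)
    (_ : a < p + gap) gap0 (_ : p + gap + gap <= 1 - gap / 2) b_large hq.
  (* [1 - gap/2 - (p + gap) - gap = r + gap/2], and [e (r + gap/2) <= gap/4] as [e <= gap/8]. *)
  by nra.
have := logistic_small_before c_ge0 exit_fun_range_in exit_logistic ap
  (_ : p <= p + gap) (_ : p + gap < b) hq.
rewrite (_ : p + gap - p = gap); last ring.
move=> hp; apply: Rle_trans (PB_le_exit_fun p _) _; first lra.
by apply: Rmult_le_compat_l; [apply: pos_INR | apply: hp; lra].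
Qed.

End Threshold.

End LinearCode.

Lemma Un_cv_eventually_lt {u : nat -> R} {l m} : Un_cv u l -> l < m ->
  exists n0, forall n, (n0 <= n)%N -> u n < m.
Proof.
move=> cv lm; have [n0 H] := cv (m - l) ltac:(lra).
by exists n0 => n /leP n0n; have := H n n0n; rewrite /Rdist => /Rabs_def2; lra.
Qed.

Lemma Un_cv_eventually_gt {u : nat -> R} {l m} : Un_cv u l -> m < l ->
  exists n0, forall n, (n0 <= n)%N -> m < u n.
Proof.
move=> cv ml; have [n0 H] := cv (l - m) ltac:(lra).
by exists n0 => n /leP n0n; have := H n n0n; rewrite /Rdist => /Rabs_def2; lra.
Qed.

Definition weight_threshold gap : R := 8 / (gap * gap * ln 2) + 2 / gap.

Lemma weight_threshold_gt0 gap : 0 < gap -> 0 < weight_threshold gap.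
Proof.
move=> gap0; have := ln2_pos; have : 0 < gap * gap by nra.
by move=> *; apply: Rplus_lt_0_compat; apply: Rdiv_lt_0_compat; nra.
Qed.

Lemma exp_decay_bounds n w gap : 2 <= n -> 0 < gap -> weight_threshold gap < w ->
  exp (- (w * ln n * gap)) <= gap / 8 /\ n * exp (- (w * ln n * gap)) <= / n.
Proof.
rewrite /weight_threshold => n2 gap0 w_large.
have l2 := ln2_pos; have ln_n : ln 2 <= ln n by apply: ln_le; lra.
have k1 : 0 < 8 / (gap * gap * ln 2).
  by apply: Rdiv_lt_0_compat; [lra | apply: Rmult_lt_0_compat; nra].
have k2 : 0 < 2 / gap by apply: Rdiv_lt_0_compat; lra.
split.
  have x_large : 8 / gap <= w * ln n * gap.
    have : 8 / gap = 8 / (gap * gap * ln 2) * ln 2 * gap.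
      by field; split; apply: Rgt_not_eq.
    move=> ->; apply: Rmult_le_compat_r; [lra | apply: Rmult_le_compat; lra].
  have x_pos : 0 < w * ln n * gap by lra.
  apply: Rle_trans (exp_neg_le_inv _ x_pos) _.
  rewrite -[gap / 8]Rinv_inv; apply: Rinv_le_contravar; last by rewrite Rinv_div.
  by apply: Rinv_0_lt_compat; lra.
apply: mul_exp_neg_le_inv; first lra.
have : 2 * ln n = 2 / gap * ln n * gap by field; apply: Rgt_not_eq.
move=> ->; apply: Rmult_le_compat_r; [lra | apply: Rmult_le_compat_r; lra].
Qed.

Theorem theorem5 (N : nat -> nat) (C : forall n, {set word (N n)})
  (r : R) (a b w : nat -> R) :
  (forall n, linear_code (C n) /\ proper_code (C n) /\ min_dist_ge2 (C n)) ->
  (forall M : nat, exists n0 : nat, forall n : nat, (n0 <= n)%N -> (M <= N n)%N) ->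
  0 < r < 1 ->
  Un_cv (fun n => rate (C n)) r ->
  (forall n, 0 <= a n < b n /\ b n <= 1) ->
  Un_cv a 0 -> Un_cv b 1 -> cv_infty w ->
  (forall n (p : R), a n < p < b n ->
     exists l : R, derivable_pt_lim (exit_fun (C n)) p l /\
       w n * ln (INR (N n)) * exit_fun (C n) p * (1 - exit_fun (C n) p) <= l) ->
  capacity_achieving C r.
Proof.
move=> codes N_large r01 rate_cv ab a_cv b_cv w_cv logistic p [p0 pr] eps eps0.
have [->|p_pos] : p = 0 \/ 0 < p by lra.
  by exists 0%N => n _; rewrite PB0 ?R_dist_eq //; case: (codes n).
set gap := (1 - r - p) / 3.
have gap_pos : 0 < gap by rewrite /gap; lra.
have [M [inv_M M_pos]] := archimed_cor1 eps eps0.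
have [n1 a_small] := Un_cv_eventually_lt a_cv p_pos.
have [n2 b_large] := Un_cv_eventually_gt b_cv (ltac:(lra) : 1 - gap / 2 < 1).
have [n3 rate_small] := Un_cv_eventually_lt rate_cv (ltac:(lra) : r < r + gap / 4).
have [n4 length_large] := N_large (maxn M 2).
have [n5 w_large] := w_cv (weight_threshold gap).
have W_pos := weight_threshold_gt0 _ gap_pos.
exists (maxn (maxn n1 n2) (maxn n3 (maxn n4 n5))) => n /leP n_large.
have [[a0 _] b1] := ab n.
have NM : (maxn M 2 <= N n)%N by apply: length_large; lia.
have N2 : 2 <= INR (N n) by apply: (le_INR 2); apply/leP; lia.
have [e_small e_tiny] :=
  exp_decay_bounds (INR (N n)) (w n) gap N2 gap_pos (w_large n ltac:(lia)).
have N_pos : (0 < N n)%N by lia.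
have c_ge0 : 0 <= w n * ln (INR (N n)).
  by apply: Rmult_le_pos; [have := w_large n ltac:(lia) | rewrite -ln_1; apply: ln_le]; lra.
have PB_small := PB_le_exp _ _ (proj1 (codes n)) _ _ _ N_pos a0 b1 c_ge0 (logistic n)
  p gap r (a_small n ltac:(lia)) gap_pos ltac:(rewrite /gap; lra) ltac:(lra)
  (b_large n ltac:(lia)) (rate_small n ltac:(lia)) e_small.
have PB_pos := PB_ge0 _ _ (proj1 (codes n)) p ltac:(lra).
have inv_N : / INR (N n) <= / INR M.
  by apply: Rinv_le_contravar; [exact/lt_0_INR | apply: le_INR; apply/leP; lia].
by rewrite /R_dist Rminus_0_r Rabs_right; lra.
Qed.
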